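(* For each $\Sigma$-tree $X$ there is a pruned tree which is a retract of $X$, and it is unique up to isomorphism: any two pruned retracts of $X$ are isomorphic.
   Context: Let $\Sigma$ be a set. A $\Sigma$-tree is a finite directed graph whose underlying undirected graph is a tree, edges labelled by elements of $\Sigma$, with distinguished start and end vertices such that there is a (possibly empty) directed path from the start vertex to the end vertex. A morphism $X\to Y$ of $\Sigma$-trees maps vertices to vertices and edges to edges, preserving the initial vertex, terminal vertex and label of each edge, and maps the start and end vertices of $X$ to those of $Y$; an isomorphism is a morphism bijective on vertices and edges. A retraction of $X$ is an idempotent morphism $X\to X$; its image (a subtree with the same start and end vertices) is a retract of $X$. $X$ is pruned if it admits no non-identity retraction. *)

From mathcomp Require Import all_boot.
Set Implicit Arguments. Unset Strict Implicit. Unset Printing Implicit Defensive.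

(* A finite directed multigraph with Sigma-labelled edges and distinguished
   start (sv) and end (ev) vertices. *)
Record sgraph (Sigma : Type) := SGraph {
  V : finType;
  E : finType;
  src : E -> V;
  tgt : E -> V;
  lab : E -> Sigma;
  sv : V;
  ev : V }.
Arguments V {Sigma}. Arguments E {Sigma}.
Arguments src {Sigma}. Arguments tgt {Sigma}. Arguments lab {Sigma}.
Arguments sv {Sigma}. Arguments ev {Sigma}.

Section Graphs.
Variable Sigma : Type.
Implicit Types X Y : sgraph Sigma.

(* undirected walk from u to v: each step is an edge and a direction
   (true = traversed from src to tgt, false = from tgt to src) *)
Fixpoint uwalk X (u v : V X) (w : seq (E X * bool)) : bool :=
  match w with
  | [::] => u == v
  | (e, b) :: w' =>
      if b then (src X e == u) && uwalk (tgt X e) v w'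
      else (tgt X e == u) && uwalk (src X e) v w'
  end.

Fixpoint dwalk X (u v : V X) (p : seq (E X)) : bool :=
  match p with
  | [::] => u == v
  | e :: p' => (src X e == u) && dwalk (tgt X e) v p'
  end.

Definition uconnected X : Prop := forall u v : V X, exists w, uwalk u v w.

(* the underlying undirected multigraph has no cycle: no nonempty closed
   walk using pairwise distinct edges (covers loops and parallel edges) *)
Definition uacyclic X : Prop :=
  ~ exists (u : V X) (w : seq (E X * bool)),
      [/\ w != [::], uniq (map fst w) & uwalk u u w].

Definition is_tree X : Prop :=
  [/\ uconnected X, uacyclic X & exists p, dwalk (sv X) (ev X) p].

Record hom X Y := Hom {
  hV : V X -> V Y;
  hE : E X -> E Y;
  hom_src : forall e, src Y (hE e) = hV (src X e);
  hom_tgt : forall e, tgt Y (hE e) = hV (tgt X e);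
  hom_lab : forall e, lab Y (hE e) = lab X e;
  hom_sv : hV (sv X) = sv Y;
  hom_ev : hV (ev X) = ev Y }.

Definition is_iso X Y (f : hom X Y) : Prop := bijective (hV f) /\ bijective (hE f).

Definition isomorphic X Y : Prop := exists f : hom X Y, is_iso f.

Definition is_retraction X (f : hom X X) : Prop :=
  (forall v, hV f (hV f v) = hV f v) /\ (forall e, hE f (hE f e) = hE f e).

Definition pruned X : Prop :=
  forall f : hom X X, is_retraction f ->
    (forall v, hV f v = v) /\ (forall e, hE f e = e).

Section Image.
Variables (X : sgraph Sigma) (f : hom X X).

Definition imV := {v : V X | v \in codom (hV f)}.
Definition imE := {e : E X | e \in codom (hE f)}.

Lemma im_src_in (e : imE) : src X (val e) \in codom (hV f).
Proof.
case: e => e /= /codomP [e' ->]; rewrite hom_src; exact: codom_f.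
Qed.

Lemma im_tgt_in (e : imE) : tgt X (val e) \in codom (hV f).
Proof.
case: e => e /= /codomP [e' ->]; rewrite hom_tgt; exact: codom_f.
Qed.

Lemma im_sv_in : sv X \in codom (hV f).
Proof. rewrite -(hom_sv f); exact: codom_f. Qed.

Lemma im_ev_in : ev X \in codom (hV f).
Proof. rewrite -(hom_ev f); exact: codom_f. Qed.

Definition image_graph : sgraph Sigma :=
  @SGraph Sigma imV imE
    (fun e => exist _ (src X (val e)) (im_src_in e))
    (fun e => exist _ (tgt X (val e)) (im_tgt_in e))
    (fun e => lab X (val e))
    (exist _ (sv X) im_sv_in)
    (exist _ (ev X) im_ev_in).
End Image.

End Graphs.

From mathcomp Require Import all_boot.
From Stdlib Require Import Classical.

(* Every endomorphism of a finite graph has an idempotent positive power.  If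
   the graph is pruned, that power is the identity, so every endomorphism of a
   pruned graph is injective; two pruned graphs with morphisms in both
   directions are therefore isomorphic.  Two retracts of X map to each other
   through X, which gives uniqueness.  For existence, if the image of a
   retraction r is not pruned, composing r with a non-identity retraction of
   that image yields a retraction with strictly smaller image, and we descend
   on the size of the image.  A retract of a tree is a tree: the retraction is
   onto the retract and the inclusion is injective on edges. *)

Section Functions.
Set Implicit Arguments. Unset Strict Implicit.

Lemma iter_periodic (T : Type) (g : T -> T) a p :
    (forall x, iter (p + a) g x = iter a g x) ->
  forall q n x, a <= n -> iter (q * p + n) g x = iter n g x.
Proof.
move=> per q n x le_an.
have perS m y : a <= m -> iter (p + m) g y = iter m g y.
  by move=> le_am; rewrite -(subnKC le_am) addnA iterD per -iterD.
elim: q => // q IH; rewrite mulSn -addnA perS ?IH //.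
exact: leq_trans le_an (leq_addl _ _).
Qed.

Lemma iter_idempotent_exists (T : finType) (g : T -> T) :
  exists2 k, 0 < k & forall x, iter k g (iter k g x) = iter k g x.
Proof.
pose F (n : 'I_#|{ffun T -> T}|.+1) := [ffun x => iter n g x].
have /injectivePn [a [b neq_ab eq_ab]] : ~~ injectiveb F.
  by apply/injectiveP => /leq_card; rewrite card_ord ltnn.
wlog lt_ab : a b neq_ab eq_ab / a < b.
  move=> IH; case: (ltngtP a b) => [|lt_ba|/val_inj eq_ab']; first exact: IH.
    by apply: (IH b a); rewrite // eq_sym.
  by rewrite eq_ab' eqxx in neq_ab.
have per x : iter ((b - a) + a) g x = iter a g x.
  by rewrite subnK ?(ltnW lt_ab) //; have /ffunP/(_ x) := eq_ab; rewrite !ffunE.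
exists ((b - a) * b); first by rewrite muln_gt0 subn_gt0 lt_ab (leq_ltn_trans _ lt_ab).
move=> x; rewrite -iterD {1}mulnC (iter_periodic per) //.
by rewrite (leq_trans (ltnW lt_ab)) // leq_pmull // subn_gt0.
Qed.

Lemma iter_idempotent_mul (T : Type) (h : T -> T) k m :
    (forall x, iter k h (iter k h x) = iter k h x) -> 0 < m ->
  forall x, iter (m * k) h x = iter k h x.
Proof.
move=> idem; case: m => // m _ x; elim: m => [|m IH]; first by rewrite mul1n.
by rewrite mulSn iterD IH idem.
Qed.

Lemma inj_comp_bij (T1 T2 : finType) (f : T1 -> T2) (g : T2 -> T1) :
  injective (g \o f) -> injective (f \o g) -> bijective f.
Proof.
move=> inj_gf inj_fg; apply: (inj_card_bij (inj_compr inj_gf)).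
exact: leq_card (inj_compr inj_fg).
Qed.

Lemma card_codom_idem_lt (T : finType) (r s : T -> T) y :
    (forall x, s (s x) = s x) -> {subset codom s <= codom r} ->
    y \in codom r -> s y != y ->
  #|codom s| < #|codom r|.
Proof.
move=> idem sub_sr y_in_r moved_y; apply/proper_card/properP; split.
  exact/subsetP.
exists y => //; apply: contraNN moved_y => /codomP [x ->].
by rewrite idem.
Qed.

End Functions.

Section Retracts.
Set Implicit Arguments. Unset Strict Implicit.
Variable Sigma : Type.
Implicit Types X Y Z : sgraph Sigma.

Definition hom_comp X Y Z (f : hom X Y) (g : hom Y Z) : hom X Z.
Proof.
refine (@Hom _ X Z (fun x => hV g (hV f x)) (fun e => hE g (hE f e)) _ _ _ _ _).
- by move=> e; rewrite !hom_src.
- by move=> e; rewrite !hom_tgt.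
- by move=> e; rewrite !hom_lab.
- by rewrite !hom_sv.
- by rewrite !hom_ev.
Defined.

Definition hom_id X : hom X X :=
  @Hom _ X X id id (fun _ => erefl) (fun _ => erefl) (fun _ => erefl) erefl erefl.

Definition hom_iter X (f : hom X X) n : hom X X :=
  iter n (fun h => hom_comp h f) (hom_id X).

Lemma hom_iterV X (f : hom X X) n v : hV (hom_iter f n) v = iter n (hV f) v.
Proof. by elim: n => //= n ->. Qed.

Lemma hom_iterE X (f : hom X X) n e : hE (hom_iter f n) e = iter n (hE f) e.
Proof. by elim: n => //= n ->. Qed.

Lemma hom_iter_retraction X (f : hom X X) :
  exists2 k, 0 < k & is_retraction (hom_iter f k).
Proof.
have [kV kV_gt0 idemV] := iter_idempotent_exists (hV f).
have [kE kE_gt0 idemE] := iter_idempotent_exists (hE f).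
exists (kE * kV); first by rewrite muln_gt0 kE_gt0.
split=> x; rewrite ?hom_iterV ?hom_iterE.
  by rewrite !(iter_idempotent_mul idemV kE_gt0).
by rewrite mulnC !(iter_idempotent_mul idemE kV_gt0).
Qed.

Lemma pruned_endo_inj X (f : hom X X) :
  pruned X -> injective (hV f) /\ injective (hE f).
Proof.
move=> prX; have [[|k] // _ /prX [idV idE]] := hom_iter_retraction f.
split.
  by apply: (@can_inj _ _ _ (iter k (hV f))) => v; rewrite -iterSr -hom_iterV.
by apply: (@can_inj _ _ _ (iter k (hE f))) => e; rewrite -iterSr -hom_iterE.
Qed.

Lemma pruned_hom_iso X Y (f : hom X Y) (g : hom Y X) :
  pruned X -> pruned Y -> is_iso f.
Proof.
move=> prX prY.
have [injV_gf injE_gf] := pruned_endo_inj (hom_comp f g) prX.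
have [injV_fg injE_fg] := pruned_endo_inj (hom_comp g f) prY.
by split; [exact: inj_comp_bij injV_gf injV_fg | exact: inj_comp_bij injE_gf injE_fg].
Qed.

Section Image.
Variables (X : sgraph Sigma) (r : hom X X).

Definition im_incl : hom (image_graph r) X := @Hom _ (image_graph r) X val val
  (fun _ => erefl) (fun _ => erefl) (fun _ => erefl) erefl erefl.

Definition im_corestr : hom X (image_graph r).
Proof.
refine (@Hom _ X (image_graph r) (fun v => exist _ (hV r v) (codom_f (hV r) v))
  (fun e => exist _ (hE r e) (codom_f (hE r) e)) _ _ _ _ _).
- by move=> e; apply: val_inj; rewrite /= hom_src.
- by move=> e; apply: val_inj; rewrite /= hom_tgt.
- by move=> e /=; rewrite hom_lab.
- by apply: val_inj; rewrite /= hom_sv.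
- by apply: val_inj; rewrite /= hom_ev.
Defined.

Hypothesis retr : is_retraction r.

Lemma im_corestrV (z : imV r) : hV im_corestr (val z) = z.
Proof. by apply: val_inj; case: z => _ /= /codomP [v ->]; rewrite (proj1 retr). Qed.

Lemma im_corestrE (z : imE r) : hE im_corestr (val z) = z.
Proof. by apply: val_inj; case: z => _ /= /codomP [e ->]; rewrite (proj2 retr). Qed.

End Image.

Lemma pruned_images_iso X (r1 r2 : hom X X) :
  pruned (image_graph r1) -> pruned (image_graph r2) ->
  isomorphic (image_graph r1) (image_graph r2).
Proof.
move=> pr1 pr2; exists (hom_comp (im_incl r1) (im_corestr r2)).
exact: pruned_hom_iso (hom_comp (im_incl r2) (im_corestr r1)) pr1 pr2.
Qed.

Lemma hom_uwalk X Y (f : hom X Y) u v w : uwalk u v w ->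
  uwalk (hV f u) (hV f v) [seq (hE f p.1, p.2) | p <- w].
Proof.
elim: w u => [|[e b] w IH] u /=; first by move/eqP->.
by case: b => /andP [/eqP <- walk_w]; rewrite ?hom_src ?hom_tgt eqxx IH.
Qed.

Lemma hom_dwalk X Y (f : hom X Y) u v p : dwalk u v p ->
  dwalk (hV f u) (hV f v) (map (hE f) p).
Proof.
elim: p u => [|e p IH] u /=; first by move/eqP->.
by case/andP=> /eqP <- walk_p; rewrite hom_src hom_tgt eqxx IH.
Qed.

Lemma hom_uconnected X Y (f : hom X Y) :
  (forall y, exists x, hV f x = y) -> uconnected X -> uconnected Y.
Proof.
move=> onto_f connX u v; have [[x <-] [y <-]] := (onto_f u, onto_f v).
by have [w walk_w] := connX x y; exists [seq (hE f p.1, p.2) | p <- w]; exact: hom_uwalk.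
Qed.

Lemma hom_uacyclic X Y (f : hom X Y) :
  injective (hE f) -> uacyclic Y -> uacyclic X.
Proof.
move=> inj_f acycY [u [w [w_ne uniq_w cycle_w]]]; apply: acycY.
exists (hV f u), [seq (hE f p.1, p.2) | p <- w]; split.
- by case: w w_ne {uniq_w cycle_w}.
- have -> : map fst [seq (hE f p.1, p.2) | p <- w] = map (hE f) (map fst w).
    by rewrite -!map_comp.
  by rewrite map_inj_uniq.
- exact: hom_uwalk.
Qed.

Lemma hom_is_tree X Y (f : hom X Y) (g : hom Y X) :
  (forall y, exists x, hV f x = y) -> injective (hE g) -> is_tree X -> is_tree Y.
Proof.
move=> onto_f inj_g [connX acycX [p walk_p]]; split.
- exact: hom_uconnected onto_f connX.
- exact: hom_uacyclic inj_g acycX.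
- by exists (map (hE f) p); rewrite -(hom_sv f) -(hom_ev f); exact: hom_dwalk.
Qed.

Lemma image_is_tree X (r : hom X X) :
  is_retraction r -> is_tree X -> is_tree (image_graph r).
Proof.
move=> retr; apply: (hom_is_tree (f := im_corestr r) (g := im_incl r)).
  by move=> z; exists (val z); exact: im_corestrV.
exact: val_inj.
Qed.

Definition im_size X (r : hom X X) := #|codom (hV r)| + #|codom (hE r)|.

Lemma smaller_retraction X (r : hom X X) :
  is_retraction r -> ~ pruned (image_graph r) ->
  exists2 s : hom X X, is_retraction s & im_size s < im_size r.
Proof.
move=> retr not_pr.
have [g not_id_g] := not_all_ex_not _ _ not_pr.
have [[idemV idemE] not_id] := imply_to_and _ _ not_id_g.
pose s := hom_comp (im_corestr r) (hom_comp g (im_incl r)).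
have sV v : hV s v = val (hV g (hV (im_corestr r) v)) by [].
have sE e : hE s e = val (hE g (hE (im_corestr r) e)) by [].
have retr_s : is_retraction s.
  by split=> x; rewrite !(sV, sE) ?im_corestrV ?im_corestrE ?idemV ?idemE.
have subV : {subset codom (hV s) <= codom (hV r)}.
  by move=> _ /codomP [x ->]; exact: valP.
have subE : {subset codom (hE s) <= codom (hE r)}.
  by move=> _ /codomP [x ->]; exact: valP.
exists s => //; rewrite /im_size.
case: (not_and_or _ _ not_id) => /not_all_ex_not [z moved_z].
- rewrite -addSn leq_add ?subset_leq_card //; last exact/subsetP.
  apply: (card_codom_idem_lt (proj1 retr_s)) subV (valP z) _.
  by rewrite sV im_corestrV //; apply/eqP => /val_inj.
- rewrite -addnS leq_add ?subset_leq_card //; first exact/subsetP.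
  apply: (card_codom_idem_lt (proj2 retr_s)) subE (valP z) _.
  by rewrite sE im_corestrE //; apply/eqP => /val_inj.
Qed.

Lemma exists_pruned_retraction X :
  exists r : hom X X, is_retraction r /\ pruned (image_graph r).
Proof.
suff: forall n (r : hom X X), im_size r < n -> is_retraction r ->
    exists r' : hom X X, is_retraction r' /\ pruned (image_graph r').
  by move/(_ _ (hom_id X) (ltnSn _)); apply.
elim=> // n IH r lt_rn retr.
have [pr_r | not_pr_r] := classic (pruned (image_graph r)); first by exists r.
have [s retr_s lt_sr] := smaller_retraction retr not_pr_r.
exact: IH s (leq_trans lt_sr lt_rn) retr_s.
Qed.

End Retracts.

Theorem proposition3p5 (Sigma : Type) (X : sgraph Sigma) :
  is_tree X ->
  (exists r : hom X X,
      [/\ is_retraction r, is_tree (image_graph r) & pruned (image_graph r)])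
  /\
  (forall r1 r2 : hom X X,
      is_retraction r1 -> pruned (image_graph r1) ->
      is_retraction r2 -> pruned (image_graph r2) ->
      isomorphic (image_graph r1) (image_graph r2)).
Proof.
move=> treeX; split=> [|r1 r2 _ pr1 _ pr2]; last exact: pruned_images_iso.
have [r [retr pr]] := exists_pruned_retraction X.
by exists r; split=> //; exact: image_is_tree.
Qed.
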